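(* Let $H$ and $G$ be real Hilbert spaces, $Z$ a nonempty closed convex subset of $H\times G$, $x_0\in H\times G$, $\{\lambda_n\}\subset(0,1]$, and $\{H_n\}$ closed convex subsets of $H\times G$ with $Z\subset H_n$ for all $n$. Consider the iteration: for $n=0,1,\dots$, $x_{n+1/2}=x_n+\lambda_n(P_{H_n}(x_n)-x_n)$ and $x_{n+1}=P_{H(x_0,x_n)\cap C_n}(x_0)$, where $C_0=H(x_0,x_{1/2})$ and, for $n\ge1$, $C_n$ is given by one of: (a) $C_n=H(x_n,x_{n+1/2})\cap H(x_{n-1},x_{(n-1)+1/2})$; (b) $C_n=H(x_n,x_{n+1/2})\cap H(x_0,x_{n-1})$; (c) $C_n=H(x_n,x_{n+1/2})\cap H(x_0,\tau_nx_n+(1-\tau_n)x_{n-1})$ with $\tau_n\in(0,1)$. Then in each case the following hold: 1. $Z\subset H(x_0,x_n)\cap C_n$ for all $n$; 2. $\|x_{n+1}-x_0\|\ge\|x_n-x_0\|$ for all $n$; 3. $\sum_n\|x_{n+1}-x_n\|^2<+\infty$; 4. $\sum_n\|x_{n+1/2}-x_n\|^2<+\infty$; 5. if every weak sequential cluster point of $\{x_n\}$ lies in $Z$, then $x_n\to P_Z(x_0)$ strongly.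
   Context: $H\times G$ has the product Hilbert structure. For $x,y\in H\times G$, $H(x,y):=\{h:\ \langle h-y\mid x-y\rangle\le 0\}$ ($H(x,x)$ is the whole space). $P_D$ is the metric projection onto a nonempty closed convex set $D$. *)

From HB Require Import structures.
From mathcomp Require Import all_boot all_order all_algebra.
From mathcomp Require Import all_classical all_reals all_analysis.
Set Implicit Arguments. Unset Strict Implicit. Unset Printing Implicit Defensive.
Import Order.TTheory GRing.Theory Num.Theory numFieldNormedType.Exports.
Local Open Scope ring_scope.
Local Open Scope classical_set_scope.

Section Hilbert.
Variables (R : realType) (V : lmodType R) (ip : V -> V -> R).

Definition hnorm (x : V) : R := Num.sqrt (ip x x).

Definition is_hilbert : Prop :=
  [/\ (forall x y, ip x y = ip y x),
      (forall a x y z, ip (a *: x + y) z = a * ip x z + ip y z),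
      (forall x, 0 <= ip x x),
      (forall x, ip x x = 0 -> x = 0) &
      (forall u : nat -> V,
        (forall e : R, 0 < e -> exists N, forall m n, (N <= m)%N -> (N <= n)%N ->
           hnorm (u m - u n) < e) ->
        exists l, (fun n => hnorm (u n - l)) @ \oo --> (0 : R))].

Definition strong_cvg (u : nat -> V) (l : V) : Prop :=
  (fun n => hnorm (u n - l)) @ \oo --> (0 : R).

Definition weak_cvg (u : nat -> V) (l : V) : Prop :=
  forall y, (fun n => ip (u n) y) @ \oo --> ip l y.

Definition weak_cluster (u : nat -> V) (w : V) : Prop :=
  exists phi : nat -> nat, (forall k, (phi k < phi k.+1)%N) /\
    weak_cvg (fun k => u (phi k)) w.

(** closed (in the norm topology; sequentially closed = closed in a metric space) *)
Definition nclosed (D : set V) : Prop :=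
  forall (u : nat -> V) l, (forall n, D (u n)) -> strong_cvg u l -> D l.

Definition hconvex (D : set V) : Prop :=
  forall x y (t : R), D x -> D y -> 0 <= t <= 1 -> D (t *: x + (1 - t) *: y).

Definition is_proj (D : set V) (x p : V) : Prop :=
  D p /\ forall d, D d -> hnorm (x - p) <= hnorm (x - d).

Definition Hs (x y : V) : set V := [set h | ip (h - y) (x - y) <= 0].

End Hilbert.

Definition prod_ip (R : realType) (H G : lmodType R)
  (ipH : H -> H -> R) (ipG : G -> G -> R) (p q : (H * G)%type) : R :=
  ipH p.1 q.1 + ipG p.2 q.2.

Inductive cut_rule := rule_a | rule_b | rule_c.

(** C_n ; C_0 = H(x0, x_{1/2});  xh n stands for x_{n+1/2} *)
Definition Cset (R : realType) (V : lmodType R) (ip : V -> V -> R)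
  (rule : cut_rule) (tau : nat -> R) (x0 : V) (x xh : nat -> V) (n : nat) : set V :=
  match n with
  | 0 => Hs ip x0 (xh 0)
  | m.+1 => Hs ip (x n) (xh n) `&`
      match rule with
      | rule_a => Hs ip (x m) (xh m)
      | rule_b => Hs ip x0 (x m)
      | rule_c => Hs ip x0 (tau n *: x n + (1 - tau n) *: x m)
      end
  end.

(* Z lies in every cut: in H(x_n, x_{n+1/2}) because x_{n+1/2} is a relaxed
   projection of x_n onto H_n, which contains Z; in the second cut of C_n by
   induction, for rule (c) because H(x0, .) is stable under convex combinations of
   points whose cuts both contain Z.  Since x_{n+1} is the projection of x0 onto a
   set containing Z and lying in H(x0, x_n), the distances |x_n - x0| increase and
   stay below |P_Z x0 - x0|, and Pythagoras in H(x0, x_n) gives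
   |x_{n+1} - x_n|^2 <= |x_{n+1} - x0|^2 - |x_n - x0|^2, which telescopes; as x_{n+1}
   lies in H(x_n, x_{n+1/2}), |x_{n+1/2} - x_n| <= |x_{n+1} - x_n|.
   If x_n did not converge to p = P_Z x0, a subsequence staying away from p would
   have a weakly convergent subsequence; its limit w is in Z and, the norm being
   weakly lower semicontinuous, |w - x0| <= |p - x0|, so w = p, and then
   |x_n - x0| <= |p - x0| upgrades weak to strong convergence.  Weak sequential
   compactness of bounded sequences comes from a diagonal extraction making
   <u_k, u_j> converge for every j: the y for which <u_k, y> converges form a closed
   subspace containing all u_j, hence everything, and the limit functional is
   represented via Riesz, itself obtained by projecting 0 onto a hyperplane. *)

From HB Require Import structures.
From mathcomp Require Import all_boot all_order all_algebra.
From mathcomp Require Import all_classical all_reals all_analysis.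
From mathcomp Require Import ring lra.
Import Order.TTheory GRing.Theory Num.Theory numFieldNormedType.Exports.
Local Open Scope ring_scope.
Local Open Scope classical_set_scope.
Set Implicit Arguments. Unset Strict Implicit. Unset Printing Implicit Defensive.

Section RealSequences.
Variable R : realType.

Lemma cvgn_eventual_subseq (a : R^nat) (g d : nat -> nat) j (l : R) :
  (forall k, (j <= k)%N -> exists2 m, (k <= m)%N & d k = g m) ->
  (a \o g) @ \oo --> l -> (a \o d) @ \oo --> l.
Proof.
move=> dg agl U /agl [N _ hN]; exists (maxn j N) => // k /= jNk.
have [m km ->] := dg k (leq_trans (leq_maxl _ _) jNk).
by apply: hN; rewrite /= (leq_trans (leq_trans (leq_maxr _ _) jNk) km).
Qed.

Lemma increasing_ge_id (s : nat -> nat) : (forall k, (s k < s k.+1)%N) ->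
  forall k, (k <= s k)%N.
Proof. by move=> s_incr; elim=> // k ih; apply: leq_ltn_trans ih _. Qed.

Lemma diagonal_extraction (c : nat -> R^nat) : (forall j, bounded_fun (c j)) ->
  exists d : nat -> nat, (forall k, (d k < d k.+1)%N) /\ forall j, cvgn (c j \o d).
Proof.
move=> c_bnd.
have : forall p : nat * (nat -> nat), exists s : nat -> nat,
    (forall k, (s k < s k.+1)%N) /\ cvgn (c p.1 \o p.2 \o s).
  case=> j g; have /bolzano_weierstrass [s /increasing_seqP s_incr s_cvg] :
    bounded_fun (c j \o g).
    by move: (c_bnd j); rewrite /bounded_near; apply: filterS => M cM n _; exact: cM.
  by exists s.
move=> /choice [S S_spec].
have S_incr j g k : (S (j, g) k < S (j, g) k.+1)%N by case: (S_spec (j, g)).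
(* Phi j.+1 refines Phi j so that c j converges along it; the diagonal
   k |-> Phi k.+1 k is, from index j on, a subsequence of Phi j.+1. *)
pose Phi := fix Phi (j : nat) : nat -> nat :=
  if j is j'.+1 then Phi j' \o S (j', Phi j') else id.
have Phi_incr j : forall k, (Phi j k < Phi j k.+1)%N.
  elim: j => [|j ih] k //=.
  by apply: (homo_ltn ltn_trans ih); apply: S_incr.
have Phi_nested j i : forall n, exists2 m, (n <= m)%N & Phi (i + j)%N n = Phi j m.
  elim: i => [|i ih] n; first by exists n.
  rewrite addSn /=; have [m Sm ->] := ih (S (i + j, Phi (i + j)%N) n).
  by exists m => //; apply: leq_trans Sm; apply: increasing_ge_id.
exists (fun k => Phi k.+1 k); split.
  move=> k; rewrite [Phi k.+2 _]/=.
  apply: (homo_ltn ltn_trans (Phi_incr k.+1)).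
  exact: leq_trans (increasing_ge_id (S_incr _ _) _).
move=> j; have [_ /cvg_ex [l cl]] := S_spec (j, Phi j).
apply/cvg_ex; exists l; apply: (cvgn_eventual_subseq (g := Phi j.+1) (j := j)) => // k jk.
by have := Phi_nested j.+1 (k - j)%N k; rewrite addnS subnK.
Qed.

Lemma not_cvg0_subseq (a : R^nat) : ~ a @ \oo --> 0 ->
  exists2 e : R, 0 < e & exists g : nat -> nat,
    (forall k, (g k < g k.+1)%N) /\ forall k, e <= `|a (g k)|.
Proof.
move=> /cvgrPdist_lt /existsNP [e /not_implyP [e0 not_near]]; exists e => //.
have far N : exists n, (N <= n)%N /\ e <= `|a n|.
  apply: contrapT => /forallNP none; apply: not_near; exists N => // n /= Nn.
  by rewrite sub0r normrN ltNge; apply/negP => ean; apply: (none n).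
have [next next_spec] := choice far.
pose g := fix g k := if k is k'.+1 then next (g k').+1 else next 0%N.
exists g; split => [k|[|k]]; first by case: (next_spec (g k).+1).
  by case: (next_spec 0%N).
by case: (next_spec (g k).+1).
Qed.

Lemma cvgn_series_bounded (f : R^nat) (B : R) : (forall n, 0 <= f n) ->
  (forall n, series f n <= B) -> cvgn (series f).
Proof.
move=> f_ge0 f_le; apply: nondecreasing_is_cvgn; last by exists B => _ [n _ <-].
by apply/nondecreasing_seqP => n; rewrite seriesSr lerDl.
Qed.

End RealSequences.

Lemma hconvexI (R : realType) (V : lmodType R) (A B : set V) :
  hconvex A -> hconvex B -> hconvex (A `&` B).
Proof. by move=> cA cB y z t [Ay By] [Az Bz] t01; split; [apply: cA | apply: cB]. Qed.

Lemma strong_cvg_of_sq (R : realType) (V : lmodType R) (ip : V -> V -> R) u l :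
  (fun n => ip (u n - l) (u n - l)) @ \oo --> 0 -> strong_cvg ip u l.
Proof.
by move=> ul; rewrite /strong_cvg -sqrtr0; apply: (continuous_cvg _ (@sqrt_continuous R 0) ul).
Qed.

Section InnerProduct.
Variables (R : realType) (V : lmodType R) (ip : V -> V -> R).
Hypothesis hV : is_hilbert ip.

Lemma ipC x y : ip x y = ip y x. Proof. by case: hV. Qed.
Lemma ipDZl a x y z : ip (a *: x + y) z = a * ip x z + ip y z. Proof. by case: hV. Qed.
Lemma ip_ge0 x : 0 <= ip x x. Proof. by case: hV. Qed.
Lemma ip_eq0 x : ip x x = 0 -> x = 0. Proof. by case: hV => _ _ _ + _; apply. Qed.

Lemma ipDl x y z : ip (x + y) z = ip x z + ip y z.
Proof. by rewrite -{1}(scale1r x) ipDZl mul1r. Qed.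
Lemma ip0l z : ip 0 z = 0.
Proof. by have := ipDl 0 0 z; rewrite addr0; lra. Qed.
Lemma ipZl a x z : ip (a *: x) z = a * ip x z.
Proof. by rewrite -(addr0 (a *: x)) ipDZl ip0l addr0. Qed.
Lemma ipNl x z : ip (- x) z = - ip x z.
Proof. by rewrite -scaleN1r ipZl mulN1r. Qed.
Lemma ipBl x y z : ip (x - y) z = ip x z - ip y z.
Proof. by rewrite ipDl ipNl. Qed.
Lemma ipDr x y z : ip z (x + y) = ip z x + ip z y.
Proof. by rewrite ipC ipDl !(ipC z). Qed.
Lemma ip0r z : ip z 0 = 0.
Proof. by rewrite ipC ip0l. Qed.
Lemma ipZr a x z : ip z (a *: x) = a * ip z x.
Proof. by rewrite ipC ipZl (ipC z). Qed.
Lemma ipNr x z : ip z (- x) = - ip z x.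
Proof. by rewrite ipC ipNl (ipC z). Qed.
Lemma ipBr x y z : ip z (x - y) = ip z x - ip z y.
Proof. by rewrite ipDr ipNr. Qed.

Definition ipE := (ipDl, ipBl, ipNl, ipZl, ip0l, ipDr, ipBr, ipNr, ipZr, ip0r).

(* Orients every pair [ip b a], [ip a b] occurring in the goal the same way,
   so that [ring] can close identities after expansion with [ipE]. *)
Ltac ip_orient := repeat match goal with
  | |- context [ip ?a ?b] => match goal with
      | |- context [ip b a] => tryif constr_eq a b then fail
                               else rewrite [ip b a]ipC
      end
  end.

Lemma ip_sqB x y : ip (x - y) (x - y) = ip x x - 2 * ip x y + ip y y.
Proof. rewrite !ipE; ip_orient; ring. Qed.
Lemma ip_sqD x y : ip (x + y) (x + y) = ip x x + 2 * ip x y + ip y y.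
Proof. rewrite !ipE; ip_orient; ring. Qed.
Lemma ip_sqBC x y : ip (x - y) (x - y) = ip (y - x) (y - x).
Proof. rewrite !ipE; ring. Qed.

Lemma ip_sqr_le x y : ip x y ^+ 2 <= ip x x * ip y y.
Proof.
have [y0|yn0] := eqVneq (ip y y) 0.
  by rewrite (ip_eq0 y0) !ip0r mulr0 expr0n.
have yp : 0 < ip y y by rewrite lt_def yn0 ip_ge0.
set t := ip x y / ip y y.
have := ip_ge0 (x - t *: y); rewrite ip_sqB !ipE.
have -> : t * (t * ip y y) = t * ip x y by rewrite /t; field.
rewrite -subr_ge0 (_ : _ - 0 = ip x x - t * ip x y); last by ring.
rewrite subr_ge0 => h.
have -> : ip x y ^+ 2 = t * ip x y * ip y y by rewrite /t; field.
by rewrite ler_pM2r.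
Qed.

Lemma hnorm_ge0 x : 0 <= hnorm ip x. Proof. exact: sqrtr_ge0. Qed.
Lemma hnorm_sq x : hnorm ip x ^+ 2 = ip x x.
Proof. by rewrite sqr_sqrtr // ip_ge0. Qed.
Lemma hnorm_le x y : (hnorm ip x <= hnorm ip y) = (ip x x <= ip y y).
Proof. by rewrite ler_sqrt // ip_ge0. Qed.
Lemma hnormBC x y : hnorm ip (x - y) = hnorm ip (y - x).
Proof. by rewrite /hnorm ip_sqBC. Qed.

Lemma normr_ip_le x y : `|ip x y| <= hnorm ip x * hnorm ip y.
Proof.
rewrite -sqrtr_sqr -sqrtrM ?ip_ge0 // ler_sqrt ?mulr_ge0 ?ip_ge0 //.
exact: ip_sqr_le.
Qed.

Lemma hnormD x y : hnorm ip (x + y) <= hnorm ip x + hnorm ip y.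
Proof.
rewrite -(ler_pXn2r (_ : 0 < 2)%N) ?nnegrE ?addr_ge0 ?hnorm_ge0 //.
rewrite sqrrD !hnorm_sq ip_sqD lerD2r lerD2l mulr_natl ler_pMn2r //.
exact: le_trans (ler_norm _) (normr_ip_le _ _).
Qed.

Lemma strong_cvgP u l :
  strong_cvg ip u l <-> (fun n => ip (u n - l) (u n - l)) @ \oo --> 0.
Proof.
split => [ul|]; last exact: strong_cvg_of_sq.
rewrite -(mulr0 0) (_ : (fun n => _) = fun n => hnorm ip (u n - l) * hnorm ip (u n - l)).
  exact: cvgM.
by apply: funext => n; rewrite -expr2 hnorm_sq.
Qed.

Lemma strong_weak_cvg u l : strong_cvg ip u l -> weak_cvg ip u l.
Proof.
move=> ul y; pose c n := hnorm ip (u n - l) * hnorm ip y.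
have c0 : c @ \oo --> 0 by rewrite -(mul0r (hnorm ip y)); apply: cvgM ul (cvg_cst _).
have ipB0 : (fun n => ip (u n - l) y) @ \oo --> 0.
  have Nc0 : (fun n => - c n) @ \oo --> 0 by rewrite -oppr0; apply: cvgN.
  apply: (squeeze_cvgr _ Nc0 c0).
  by near=> n; rewrite -ler_norml normr_ip_le.
rewrite -[ip l y]add0r (_ : (fun n => _) = fun n => ip (u n - l) y + ip l y).
  exact: cvgD ipB0 (cvg_cst _).
by apply: funext => n; rewrite ipBl subrK.
Unshelve. all: by end_near.
Qed.

Lemma strong_cvg_ip_self u l :
  strong_cvg ip u l -> (fun n => ip (u n) (u n)) @ \oo --> ip l l.
Proof.
move=> ul; have /strong_cvgP sq := ul; have /(_ l) wk := strong_weak_cvg ul.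
have lim : (fun n => ip (u n - l) (u n - l) + 2 * ip (u n) l - ip l l) @ \oo -->
    0 + 2 * ip l l - ip l l.
  by apply: cvgB (cvg_cst _); apply: cvgD sq _; apply: cvgM wk; apply: cvg_cst.
rewrite (_ : 0 + _ - _ = ip l l) in lim; last by ring.
by apply: cvg_trans lim; apply: near_eq_cvg; near=> n; rewrite !ipE; ip_orient; ring.
Unshelve. all: by end_near.
Qed.

(** * Half-spaces and projections *)

Lemma Hs_id a h : Hs ip a a h.
Proof. by rewrite /Hs /= subrr ip0r. Qed.

Lemma Hs_convex a b : hconvex (Hs ip a b).
Proof.
move=> y z t; rewrite /Hs /= => hy hz /andP [t0 t1].
have -> : ip (t *: y + (1 - t) *: z - b) (a - b) =
    t * ip (y - b) (a - b) + (1 - t) * ip (z - b) (a - b) by rewrite !ipE; ring.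
nra.
Qed.

Lemma Hs_pythagoras a b c : Hs ip c b a ->
  ip (c - b) (c - b) + ip (a - b) (a - b) <= ip (a - c) (a - c).
Proof.
rewrite /Hs /= (_ : a - c = (a - b) - (c - b)); last by rewrite opprB addrA subrK.
by rewrite (ip_sqB (a - b)); lra.
Qed.

Lemma proj_sub_Hs D x p : hconvex D -> is_proj ip D x p -> D `<=` Hs ip x p.
Proof.
move=> D_cvx [Dp p_min] d Dd; rewrite /Hs /= leNgt; apply/negP => c_gt0.
set c := ip (d - p) (x - p) in c_gt0; set q := ip (d - p) (d - p).
have q_ge0 : 0 <= q by apply: ip_ge0.
have cq_gt0 : 0 < c + q by rewrite ltr_wpDr.
(* the point of [d, p] at parameter [c / (c + q)] is strictly closer to x than p *)
set t := c / (c + q).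
have t_gt0 : 0 < t by rewrite divr_gt0.
have tcq : t * (c + q) = c by rewrite mulrVK // unitfE gt_eqF.
have t01 : 0 <= t <= 1 by rewrite ltW //= ler_pdivrMr // mul1r lerDl.
have := p_min _ (D_cvx d p t Dd Dp t01); rewrite hnorm_le.
have -> : ip (x - (t *: d + (1 - t) *: p)) (x - (t *: d + (1 - t) *: p)) =
    ip (x - p) (x - p) - 2 * t * c + t ^+ 2 * q.
  by rewrite /c /q !ipE; ip_orient; ring.
nra.
Qed.

Lemma proj_orth D x p s : hconvex D -> is_proj ip D x p ->
  D (p + s) -> D (p - s) -> ip s (x - p) = 0.
Proof.
move=> D_cvx px /(proj_sub_Hs D_cvx px) + /(proj_sub_Hs D_cvx px).
by rewrite /Hs /= addrAC subrr add0r (addrC p) addrK ipNl; lra.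
Qed.

Lemma proj_le_eq D x p w : hconvex D -> is_proj ip D x p -> D w ->
  ip (w - x) (w - x) <= ip (p - x) (p - x) -> w = p.
Proof.
move=> D_cvx px /(proj_sub_Hs D_cvx px) /Hs_pythagoras.
rewrite (ip_sqBC x) => pyth wx; apply/eqP; rewrite -subr_eq0; apply/eqP/ip_eq0.
by have := ip_ge0 (w - p); lra.
Qed.

Lemma parallelogram x a b : ip (a - b) (a - b) =
  2 * ip (x - a) (x - a) + 2 * ip (x - b) (x - b)
  - 4 * ip (x - (2^-1 *: a + (1 - 2^-1) *: b)) (x - (2^-1 *: a + (1 - 2^-1) *: b)).
Proof. by rewrite !ipE; ip_orient; field. Qed.

Lemma proj_exists D x : D !=set0 -> nclosed ip D -> hconvex D ->
  exists p, is_proj ip D x p.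
Proof.
move=> [d0 Dd0] D_cl D_cvx.
pose S := [set ip (x - d) (x - d) | d in D].
have S_inf : has_inf S.
  split; first by exists (ip (x - d0) (x - d0)), d0.
  by exists 0 => _ [d _ <-]; apply: ip_ge0.
pose m := inf S.
have m_le d : D d -> m <= ip (x - d) (x - d).
  by move=> Dd; apply: (ge_inf S_inf.2); exists d.
have /choice [z z_spec] :
    forall n, exists d, D d /\ ip (x - d) (x - d) < m + harmonic n.
  by move=> n; have [_ [d Dd <-] ?] := inf_adherent (harmonic_gt0 n) S_inf; exists d.
have zD n : D (z n) by case: (z_spec n).
have z_cauchy (e : R) : 0 < e -> exists N, forall i j, (N <= i)%N -> (N <= j)%N ->
    hnorm ip (z i - z j) < e.
  move=> e_gt0; have e4 : 0 < e ^+ 2 / 4 by rewrite divr_gt0 ?exprn_gt0.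
  have [N _ hN] := cvgr_lt _ (@cvg_harmonic R) _ e4.
  exists N => i j Ni Nj.
  rewrite -(ltr_pXn2r (_ : 0 < 2)%N) ?nnegrE ?hnorm_ge0 ?ltW // hnorm_sq.
  have half01 : (0 <= (2^-1 : R) <= 1) by apply/andP; split; lra.
  rewrite (parallelogram x (z i) (z j)).
  have := m_le _ (D_cvx _ _ _ (zD i) (zD j) half01).
  have := z_spec i; have := z_spec j; have := hN i Ni; have := hN j Nj.
  by clearbody m; move=> hj hi [_ zj] [_ zi] hmid; lra.
have [l zl] : exists l, strong_cvg ip z l by case: hV => _ _ _ _; apply.
exists l; split; first exact: D_cl zl.
move=> d Dd; rewrite hnorm_le; apply: le_trans (m_le d Dd).
have xzl : strong_cvg ip (fun n => x - z n) (x - l).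
  by rewrite /strong_cvg; under eq_fun do rewrite opprB addrC addrA subrK hnormBC.
apply: (ler_cvg_to (strong_cvg_ip_self xzl)) => [|].
  by rewrite -[m]addr0; apply: cvgD (cvg_cst _) cvg_harmonic.
by near=> n; apply: ltW; case: (z_spec n).
Unshelve. all: by end_near.
Qed.

(** * Weak sequential compactness *)

Lemma riesz_representation (f : V -> R) (C : R) :
  (forall a y z, f (a *: y + z) = a * f y + f z) ->
  (forall y, `|f y| <= C * hnorm ip y) -> exists w, forall y, f y = ip w y.
Proof.
move=> f_lin f_bnd.
have f0 : f 0 = 0 by have := f_lin 1 0 0; rewrite scale1r addr0 mul1r; lra.
have fD y z : f (y + z) = f y + f z by have := f_lin 1 y z; rewrite scale1r mul1r.
have fZ a y : f (a *: y) = a * f y by rewrite -[a *: y]addr0 f_lin f0 addr0.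
have fB y z : f (y - z) = f y - f z by rewrite -scaleN1r fD fZ mulN1r.
have [f_eq0|/existsNP [y0 fy0]] := pselect (forall y, f y = 0).
  by exists 0 => y; rewrite ip0l f_eq0.
(* w is proportional to the point of the hyperplane [f = 1] closest to 0 *)
pose A := [set y | f y = 1].
have A_ne : A !=set0 by exists ((f y0)^-1 *: y0); rewrite /A /= fZ mulVf //; apply/eqP.
have A_cvx : hconvex A by move=> y z t; rewrite /A /= fD !fZ => -> -> _; ring.
have A_cl : nclosed ip A.
  move=> z l Az zl; apply/eqP; rewrite /A /= -subr_eq0 -normr_le0.
  have Cz0 : (fun n => C * hnorm ip (z n - l)) @ \oo --> 0.
    by rewrite -(mulr0 C); apply: cvgM (cvg_cst _) zl.
  apply: (ler_cvg_to (cvg_cst _) Cz0).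
  by near=> n; rewrite -(Az n) -fB hnormBC; apply: f_bnd.
have [p p_proj] := proj_exists 0 A_ne A_cl A_cvx.
have fp : f p = 1 by case: p_proj.
have p_orth k : f k = 0 -> ip k p = 0.
  move=> fk; have Apk : A (p + k) by rewrite /A /= fD fk fp addr0.
  have Amk : A (p - k) by rewrite /A /= fB fk fp subr0.
  by have := proj_orth A_cvx p_proj Apk Amk; rewrite sub0r ipNr; lra.
have pp : ip p p != 0.
  by apply/eqP => /ip_eq0 p0; move: fp; rewrite p0 f0 => /eqP; rewrite eq_sym oner_eq0.
exists ((ip p p)^-1 *: p) => y.
have : ip (y - f y *: p) p = 0 by apply: p_orth; rewrite fB fZ fp mulr1 subrr.
rewrite ipBl ipZl ipZl (ipC p) => /eqP; rewrite subr_eq0 => /eqP ->.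
by rewrite mulrCA mulVf ?mulr1.
Unshelve. all: by end_near.
Qed.

Lemma cvgn_ip_closed (v : nat -> V) (M : R) : (forall k, hnorm ip (v k) <= M) ->
  nclosed ip [set y | cvgn (fun k => ip (v k) y)].
Proof.
move=> vM z l zS zl; apply/cauchy_cvgP/cauchy_exP => e e_gt0.
have M1_gt0 : 0 < M + 1 by rewrite ltr_wpDl // (le_trans (hnorm_ge0 _) (vM 0%N)).
have e2_gt0 : 0 < e / 2 by rewrite divr_gt0.
have [i _ /(_ i (leqnn i)) /= zil] :=
  cvgr_lt _ zl (e / 2 / (M + 1)) (divr_gt0 e2_gt0 M1_gt0).
have /cvg_ex [L zL] := zS i.
have [K _ hK] := cvgr_dist_lt _ _ zL _ e2_gt0.
exists L; exists K => // k /hK /= Lk; rewrite /ball /=.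
have vzl : `|ip (v k) (z i - l)| < e / 2.
  have := normr_ip_le (v k) (z i - l); have := hnorm_ge0 (z i - l).
  have := ler_wpM2r (hnorm_ge0 (z i - l)) (vM k).
  by rewrite ltr_pdivlMr // in zil; nra.
rewrite (_ : L - ip (v k) l = (L - ip (v k) (z i)) + ip (v k) (z i - l)).
  by apply: le_lt_trans (ler_normD _ _) _; lra.
by rewrite ipBr addrA subrK.
Qed.

Lemma cvgn_ip_everywhere (v : nat -> V) (M : R) (U : set V) :
  (forall k, hnorm ip (v k) <= M) -> (forall k, U (v k)) ->
  (forall y, U y -> cvgn (fun k => ip (v k) y)) ->
  forall y, cvgn (fun k => ip (v k) y).
Proof.
move=> vM Uv Ucvg y; pose S := [set y | cvgn (fun k => ip (v k) y)].
have S_lin a s t : S s -> S t -> S (a *: s + t).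
  move=> /cvg_ex [ls vs] /cvg_ex [lt vt]; apply/cvg_ex; exists (a * ls + lt).
  by under eq_fun do rewrite ipDr ipZr; apply: cvgD vt; apply: cvgM vs; apply: cvg_cst.
have S0 : S 0 by rewrite /S /=; under eq_fun do rewrite ip0r; apply: is_cvg_cst.
have S_cvx : hconvex S.
  by move=> s t a Ss St _; apply: (S_lin) => //; rewrite -[X in S X]addr0; apply: S_lin.
(* y differs from its projection q onto S by a vector orthogonal to S, hence to every v k *)
have [q [Sq q_min]] := proj_exists y (ex_intro _ 0 S0) (cvgn_ip_closed vM) S_cvx.
have q_orth s : S s -> ip s (y - q) = 0.
  move=> Ss; apply: (proj_orth S_cvx (conj Sq q_min)).
    by rewrite addrC -[s]scale1r; apply: S_lin.
  by rewrite addrC -scaleN1r; apply: S_lin.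
rewrite /S /= (_ : (fun k => _) = fun k => ip (v k) q); first exact: Sq.
by apply: funext => k; apply/eqP; rewrite -subr_eq0 -ipBr q_orth //; apply: Ucvg.
Qed.

Lemma weak_limit_exists (v : nat -> V) (M : R) :
  (forall k, hnorm ip (v k) <= M) -> (forall y, cvgn (fun k => ip (v k) y)) ->
  exists w, weak_cvg ip v w.
Proof.
move=> vM v_cvg; pose f y := lim ((fun k => ip (v k) y) @ \oo).
have f_lin a y z : f (a *: y + z) = a * f y + f z.
  apply: cvg_lim => //; under eq_fun do rewrite ipDr ipZr.
  by apply: cvgD (v_cvg z); apply: cvgM (v_cvg y); apply: cvg_cst.
have f_bnd y : `|f y| <= M * hnorm ip y.
  apply: (ler_cvg_to (cvg_norm (v_cvg y)) (cvg_cst _)).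
  by near=> k; apply: le_trans (normr_ip_le _ _) _; apply: ler_wpM2r (vM k); apply: hnorm_ge0.
have [w fw] := riesz_representation f_lin f_bnd.
by exists w => y; rewrite -fw; apply: v_cvg.
Unshelve. all: by end_near.
Qed.

Lemma bounded_weak_subseq (u : nat -> V) (M : R) : (forall n, hnorm ip (u n) <= M) ->
  exists phi : nat -> nat, (forall k, (phi k < phi k.+1)%N) /\
    exists w, weak_cvg ip (fun k => u (phi k)) w.
Proof.
move=> uM.
have c_bnd j : bounded_fun (fun n => ip (u n) (u j)).
  exists (M * M); split; first by rewrite num_real.
  move=> B MB n _ /=; apply: le_trans (normr_ip_le _ _) (le_trans _ (ltW MB)).
  by apply: ler_pM; rewrite ?hnorm_ge0.
have [d [d_incr d_cvg]] := diagonal_extraction c_bnd.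
exists d; split => //; apply: (@weak_limit_exists _ M) => [k|]; first exact: uM.
apply: (@cvgn_ip_everywhere _ M (range u)) => [k|k|_ [j _ <-]].
- exact: uM.
- by exists (d k).
- exact: d_cvg.
Qed.

Lemma weak_cvg_ipBl (s : nat -> V) w x0 y : weak_cvg ip s w ->
  (fun k => ip (s k - x0) y) @ \oo --> ip (w - x0) y.
Proof.
by move=> sw; under eq_fun do rewrite ipBl; rewrite ipBl; apply: cvgB (sw y) (cvg_cst _).
Qed.

Lemma weak_cvg_sq_le (s : nat -> V) w x0 (r : R) : weak_cvg ip s w ->
  (forall k, ip (s k - x0) (s k - x0) <= r) -> ip (w - x0) (w - x0) <= r.
Proof.
move=> sw sr.
have lim : (fun k => 2 * ip (s k - x0) (w - x0)) @ \oo --> 2 * ip (w - x0) (w - x0).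
  by apply: cvgM; [exact: cvg_cst | exact: weak_cvg_ipBl].
suff : 2 * ip (w - x0) (w - x0) <= r + ip (w - x0) (w - x0) by lra.
apply: (ler_cvg_to lim (cvg_cst _)); near=> k.
have := ip_ge0 ((s k - x0) - (w - x0)); rewrite (ip_sqB (s k - x0)).
by have := sr k; lra.
Unshelve. all: by end_near.
Qed.

Lemma weak_cvg_sq_le_strong (s : nat -> V) p x0 : weak_cvg ip s p ->
  (forall k, ip (s k - x0) (s k - x0) <= ip (p - x0) (p - x0)) -> strong_cvg ip s p.
Proof.
move=> sp sr; apply/strong_cvgP.
pose c k := 2 * (ip (p - x0) (p - x0) - ip (s k - x0) (p - x0)).
have c0 : c @ \oo --> 2 * (ip (p - x0) (p - x0) - ip (p - x0) (p - x0)).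
  by apply: cvgM; [exact: cvg_cst | apply: cvgB; [exact: cvg_cst | exact: weak_cvg_ipBl]].
rewrite subrr mulr0 in c0; apply: (squeeze_cvgr _ (cvg_cst 0) c0).
near=> k; rewrite ip_ge0 /= /c (_ : s k - p = (s k - x0) - (p - x0)).
  by rewrite (ip_sqB (s k - x0)); have := sr k; lra.
by rewrite opprB addrA subrK.
Unshelve. all: by end_near.
Qed.

Lemma strong_cvg_to_proj (Z : set V) (x : nat -> V) x0 p :
  hconvex Z -> is_proj ip Z x0 p ->
  (forall n, ip (x n - x0) (x n - x0) <= ip (p - x0) (p - x0)) ->
  (forall w, weak_cluster ip x w -> Z w) -> strong_cvg ip x p.
Proof.
move=> Z_cvx px xr x_clus.
apply: contrapT => /not_cvg0_subseq [e e_gt0 [g [g_incr g_far]]].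
have gM n : hnorm ip (x (g n)) <= hnorm ip (p - x0) + hnorm ip x0.
  rewrite -[x (g n)](subrK x0); apply: le_trans (hnormD _ _) _.
  by rewrite lerD2r hnorm_le.
have [phi [phi_incr [w sw]]] := bounded_weak_subseq gM.
have Zw : Z w.
  apply: x_clus; exists (g \o phi); split => // k.
  exact: (homo_ltn ltn_trans g_incr (phi_incr k)).
have wp : w = p by apply: (proj_le_eq Z_cvx px Zw); apply: (weak_cvg_sq_le sw).
rewrite wp in sw; have := weak_cvg_sq_le_strong sw (fun k => xr (g (phi k))).
move=> /cvgr_lt /(_ e e_gt0) [N _ /(_ N (leqnn N)) /=].
by have := g_far (phi N); rewrite ger0_norm ?hnorm_ge0 //; lra.
Qed.

Lemma relaxed_proj_sub_Hs D x p (lam : R) : hconvex D -> is_proj ip D x p ->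
  0 < lam <= 1 -> D `<=` Hs ip x (x + lam *: (p - x)).
Proof.
move=> D_cvx px /andP [lam_gt0 lam_le1] z /(proj_sub_Hs D_cvx px); rewrite /Hs /= => zp.
have -> : ip (z - (x + lam *: (p - x))) (x - (x + lam *: (p - x))) =
    lam * ip (z - p) (x - p) - lam * (1 - lam) * ip (x - p) (x - p).
  by rewrite !ipE; ip_orient; ring.
have : 0 <= lam * (1 - lam) * ip (x - p) (x - p).
  by rewrite !mulr_ge0 ?ip_ge0 ?subr_ge0 // ltW.
have : lam * ip (z - p) (x - p) <= 0 by rewrite mulr_ge0_le0 // ltW.
lra.
Qed.

Lemma Hs_combination x0 a b (t : R) : 0 <= t <= 1 ->
  Hs ip x0 a `&` Hs ip x0 b `<=` Hs ip x0 (t *: a + (1 - t) *: b).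
Proof.
move=> /andP [t_ge0 t_le1] z []; rewrite /Hs /= => za zb.
have -> : ip (z - (t *: a + (1 - t) *: b)) (x0 - (t *: a + (1 - t) *: b)) =
    t * ip (z - a) (x0 - a) + (1 - t) * ip (z - b) (x0 - b)
    - t * (1 - t) * ip (a - b) (a - b).
  by rewrite !ipE; ip_orient; ring.
have : 0 <= t * (1 - t) * ip (a - b) (a - b) by rewrite !mulr_ge0 ?ip_ge0 ?subr_ge0.
have : t * ip (z - a) (x0 - a) <= 0 by rewrite mulr_ge0_le0.
have : (1 - t) * ip (z - b) (x0 - b) <= 0 by rewrite mulr_ge0_le0 ?subr_ge0.
lra.
Qed.

(* Keeps [n] explicit in hypotheses such as [Hn_cvx : forall n, hconvex (Hn n)]. *)
Unset Implicit Arguments.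

Section Iteration.
Variables (Z : set V) (x0 : V) (lam : nat -> R) (Hn : nat -> set V).
Variables (rule : cut_rule) (tau : nat -> R) (x xh : nat -> V).
Hypotheses (Z_ne : Z !=set0) (Z_cvx : hconvex Z).
Hypotheses (lam_in : forall n, 0 < lam n <= 1) (Hn_cvx : forall n, hconvex (Hn n)).
Hypothesis ZHn : forall n, Z `<=` Hn n.
Hypothesis tau_in : rule = rule_c -> forall n, (0 < n)%N -> 0 < tau n < 1.
Hypothesis x_0 : x 0%N = x0.
Hypothesis step_half : forall n, exists p, is_proj ip (Hn n) (x n) p /\
  xh n = x n + lam n *: (p - x n).
Let Q n := Hs ip x0 (x n) `&` Cset ip rule tau x0 x xh n.
Hypothesis step : forall n, is_proj ip (Q n) x0 (x n.+1).

Lemma Q_convex n : hconvex (Q n).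
Proof.
apply: hconvexI; first exact: Hs_convex.
by case: n => [|n] /=; [|apply: hconvexI; last case: rule]; apply: Hs_convex.
Qed.

Lemma Z_sub_Hs_half n : Z `<=` Hs ip (x n) (xh n).
Proof.
have [p [px ->]] := step_half n.
exact: subset_trans (ZHn n) (relaxed_proj_sub_Hs (Hn_cvx n) px (lam_in n)).
Qed.

Lemma Z_sub_Q_of_Hs n : Z `<=` Hs ip x0 (x n) ->
  (forall m, n = m.+1 -> Z `<=` Hs ip x0 (x m)) -> Z `<=` Q n.
Proof.
move=> Zn Zpred z Zz; split; first exact: Zn.
case: n Zn Zpred => [|m] Zn Zpred /=; first by rewrite -{1}x_0; apply: Z_sub_Hs_half.
split; first exact: Z_sub_Hs_half.
case E: rule.
- exact: Z_sub_Hs_half.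
- exact: Zpred.
- apply: Hs_combination; last by split; [apply: Zn | apply: Zpred].
  by have /andP [t_gt0 t_lt1] := tau_in E m.+1 (ltn0Sn m); rewrite !ltW.
Qed.

Lemma Z_sub_Hs_x0 n : Z `<=` Hs ip x0 (x n).
Proof.
elim/ltn_ind: n => -[_|n IH]; first by rewrite x_0 => z _; apply: Hs_id.
apply: subset_trans (proj_sub_Hs (Q_convex n) (step n)).
by apply: Z_sub_Q_of_Hs => [|m nm]; apply: IH; rewrite ?nm ltnS ?leqnSn.
Qed.

Lemma Z_sub_Q n : Z `<=` Q n.
Proof. by apply: Z_sub_Q_of_Hs => [|m _]; apply: Z_sub_Hs_x0. Qed.

Lemma dist_x0_le z n : Z z -> ip (x n - x0) (x n - x0) <= ip (z - x0) (z - x0).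
Proof.
case: n => [|n] Zz; first by rewrite x_0 subrr ip0r ip_ge0.
by rewrite ip_sqBC (ip_sqBC z) -hnorm_le; apply: (step n).2; apply: Z_sub_Q.
Qed.

Lemma x_step_pythagoras n : ip (x0 - x n) (x0 - x n) +
  ip (x n.+1 - x n) (x n.+1 - x n) <= ip (x n.+1 - x0) (x n.+1 - x0).
Proof. by apply: Hs_pythagoras; case: (step n) => -[]. Qed.

Lemma half_step_le n :
  ip (xh n - x n) (xh n - x n) <= ip (x n.+1 - x n) (x n.+1 - x n).
Proof.
have : Hs ip (x n) (xh n) (x n.+1).
  have [[_ Cn] _] := step n.
  by case: n Cn => [|n] /=; [rewrite x_0 | case].
move=> /Hs_pythagoras; rewrite ip_sqBC; have := ip_ge0 (x n.+1 - xh n); lra.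
Qed.

Lemma series_step_le n :
  series (fun n => hnorm ip (x n.+1 - x n) ^+ 2) n <= ip (x n - x0) (x n - x0).
Proof.
elim: n => [|n IH]; first by rewrite /series /= big_geq // ip_ge0.
rewrite seriesSr hnorm_sq; have := x_step_pythagoras n; rewrite (ip_sqBC x0); lra.
Qed.

Lemma outer_approximation_iteration :
  [/\ (forall n, Z `<=` Q n),
      (forall n, hnorm ip (x n - x0) <= hnorm ip (x n.+1 - x0)),
      cvg (series (fun n => hnorm ip (x n.+1 - x n) ^+ 2) @ \oo),
      cvg (series (fun n => hnorm ip (xh n - x n) ^+ 2) @ \oo) &
      ((forall w, weak_cluster ip x w -> Z w) ->
        forall p, is_proj ip Z x0 p -> strong_cvg ip x p)].
Proof.
have [z Zz] := Z_ne.
split.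
- exact: Z_sub_Q.
- move=> n; rewrite hnorm_le (ip_sqBC (x n)).
  by have := x_step_pythagoras n; have := ip_ge0 (x n.+1 - x n); lra.
- apply: (cvgn_series_bounded (B := ip (z - x0) (z - x0))) => n; first exact: sqr_ge0.
  exact: le_trans (series_step_le n) (dist_x0_le z n Zz).
- apply: (cvgn_series_bounded (B := ip (z - x0) (z - x0))) => n; first exact: sqr_ge0.
  apply: le_trans _ (le_trans (series_step_le n) (dist_x0_le z n Zz)).
  by apply: ler_sum => i _; rewrite !hnorm_sq half_step_le.
- move=> clusters p pZ; apply: (strong_cvg_to_proj Z_cvx pZ _ clusters) => n.
  by apply: dist_x0_le; case: pZ.
Qed.

End Iteration.

End InnerProduct.

Section ProductHilbert.
Variables (R : realType) (H G : lmodType R) (ipH : H -> H -> R) (ipG : G -> G -> R).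
Hypotheses (hH : is_hilbert ipH) (hG : is_hilbert ipG).

Lemma hnorm_fst_le p : hnorm ipH p.1 <= hnorm (prod_ip ipH ipG) p.
Proof. by rewrite ler_sqrt ?addr_ge0 ?(ip_ge0 hH) ?(ip_ge0 hG) // lerDl (ip_ge0 hG). Qed.

Lemma hnorm_snd_le p : hnorm ipG p.2 <= hnorm (prod_ip ipH ipG) p.
Proof. by rewrite ler_sqrt ?addr_ge0 ?(ip_ge0 hH) ?(ip_ge0 hG) // lerDr (ip_ge0 hH). Qed.

Lemma prod_hilbert : is_hilbert (prod_ip ipH ipG).
Proof.
rewrite /prod_ip; split.
- by move=> p q; rewrite (ipC hH) (ipC hG).
- by move=> a p q r /=; rewrite (ipDZl hH) (ipDZl hG); ring.
- by move=> p; rewrite addr_ge0 ?(ip_ge0 hH) ?(ip_ge0 hG).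
- move=> [a b] /= ab0; have a0 := ip_ge0 hH a; have b0 := ip_ge0 hG b.
  have aa0 : ipH a a = 0 by lra.
  have bb0 : ipG b b = 0 by lra.
  by rewrite (ip_eq0 hH aa0) (ip_eq0 hG bb0).
move=> u u_cauchy.
have [l1 ul1] : exists l, strong_cvg ipH (fun n => (u n).1) l.
  case: hH => _ _ _ _; apply => e /u_cauchy [N uN]; exists N => m n Nm Nn.
  exact: le_lt_trans (hnorm_fst_le _) (uN m n Nm Nn).
have [l2 ul2] : exists l, strong_cvg ipG (fun n => (u n).2) l.
  case: hG => _ _ _ _; apply => e /u_cauchy [N uN]; exists N => m n Nm Nn.
  exact: le_lt_trans (hnorm_snd_le _) (uN m n Nm Nn).
exists (l1, l2); apply: strong_cvg_of_sq; rewrite -(addr0 0).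
exact: cvgD ((strong_cvgP hH _ _).1 ul1) ((strong_cvgP hG _ _).1 ul2).
Qed.

End ProductHilbert.

Theorem proposition8 (R : realType) (H G : lmodType R)
  (ipH : H -> H -> R) (ipG : G -> G -> R)
  (hH : is_hilbert ipH) (hG : is_hilbert ipG)
  (Z : set (H * G)%type)
  (Z_ne : Z !=set0) (Z_cl : nclosed (prod_ip ipH ipG) Z) (Z_cv : hconvex Z)
  (x0 : (H * G)%type) (lam : nat -> R) (lam_in : forall n, 0 < lam n <= 1)
  (Hn : nat -> set (H * G)%type)
  (Hn_cl : forall n, nclosed (prod_ip ipH ipG) (Hn n))
  (Hn_cv : forall n, hconvex (Hn n))
  (ZHn : forall n, Z `<=` Hn n)
  (rule : cut_rule) (tau : nat -> R)
  (tau_in : rule = rule_c -> forall n, (0 < n)%N -> 0 < tau n < 1)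
  (x xh : nat -> (H * G)%type)
  (x_0 : x 0%N = x0)
  (step_half : forall n, exists p, is_proj (prod_ip ipH ipG) (Hn n) (x n) p /\
                 xh n = x n + lam n *: (p - x n))
  (step : forall n, is_proj (prod_ip ipH ipG)
            (Hs (prod_ip ipH ipG) x0 (x n) `&` Cset (prod_ip ipH ipG) rule tau x0 x xh n)
            x0 (x n.+1)) :
  let ip := prod_ip ipH ipG in
  [/\ (forall n, Z `<=` Hs ip x0 (x n) `&` Cset ip rule tau x0 x xh n),
      (forall n, hnorm ip (x n - x0) <= hnorm ip (x n.+1 - x0)),
      cvg (series (fun n => hnorm ip (x n.+1 - x n) ^+ 2) @ \oo),
      cvg (series (fun n => hnorm ip (xh n - x n) ^+ 2) @ \oo) &
      ((forall w, weak_cluster ip x w -> Z w) ->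
        forall p, is_proj ip Z x0 p -> strong_cvg ip x p)].
Proof.
(* [Z_cl] and [Hn_cl] only serve to make the projections exist; [step_half], [step]
   and the hypothesis on [p] provide them. *)
by move=> ip; apply: outer_approximation_iteration => //; apply: prod_hilbert.
Qed.
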